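(* Let $l\subset[0,1]$ be a compact set and let $f:[0,\infty)\to[0,\infty)$ be a function such that for every $a\in l$, \[ \#\big(W(l,a)\cap[1,N]\big)=o_a(f(N))\quad\text{as }N\to\infty . \] Let $g(x)=\exp\big(-f(1-\log x/\log 2)\big)$ for $x\in(0,1)$, $g(0)=0$. Then $\mathcal{H}^g(l)<\infty$. In particular, if $f(N)=N^{\sigma}$ with $\sigma\in(0,1)$ one may take $g(x)=\exp(-(-\log x)^{\sigma})$, and if $\#(W(l,a)\cap[1,N])=o_a(N)$ for all $a\in l$ then $\dim_{\mathrm H} l=0$.
   Context: For a compact set $l\subset\mathbb{R}$ let $W(l)=\{k\in\mathbb{N}: l\cap([2^{-k-1},2^{-k}]\cup[-2^{-k},-2^{-k-1}])\neq\emptyset\}$, and for $a\in l$ let $W(l,a)=W(l-a)$. For a gauge function $g$, $\mathcal{H}^g(F)=\lim_{\delta\to0}\inf\{\sum_i g(\operatorname{diam}U_i): F\subset\bigcup_iU_i,\ \operatorname{diam}U_i<\delta\}$. *)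

From Stdlib Require Import Reals Lra Lia ClassicalEpsilon.
Open Scope R_scope.

Inductive ER : Type := Fin (r : R) | PInf.

Definition is_glb (E : R -> Prop) (m : R) : Prop :=
  (forall x, E x -> m <= x) /\ (forall b, (forall x, E x -> b <= x) -> b <= m).

(** [has_diam U d]: d is the diameter of U (diam of the empty set is 0;
    unbounded sets have no (finite) diameter). *)
Definition has_diam (U : R -> Prop) (d : R) : Prop :=
  ((forall x, ~ U x) /\ d = 0) \/
  is_lub (fun t => exists x y, U x /\ U y /\ t = Rabs (x - y)) d.

Definition cover_sum (g : R -> R) (F : R -> Prop) (delta s : R) : Prop :=
  exists (U : nat -> R -> Prop) (d : nat -> R),
    (forall i, has_diam (U i) (d i) /\ d i < delta) /\
    (forall x, F x -> exists i, U i x) /\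
    infinite_sum (fun i => g (d i)) s.

Definition is_Hdelta (g : R -> R) (F : R -> Prop) (delta : R) (v : ER) : Prop :=
  match v with
  | PInf => forall s, ~ cover_sum g F delta s
  | Fin m => is_glb (cover_sum g F delta) m
  end.

Definition is_Hmeasure (g : R -> R) (F : R -> Prop) (v : ER) : Prop :=
  exists Hd : R -> ER,
    (forall delta, 0 < delta -> is_Hdelta g F delta (Hd delta)) /\
    match v with
    | PInf => forall M, exists d0, 0 < d0 /\ forall delta, 0 < delta < d0 ->
                Hd delta = PInf \/ exists m, Hd delta = Fin m /\ M < m
    | Fin r => forall eps, 0 < eps -> exists d0, 0 < d0 /\
                forall delta, 0 < delta < d0 ->
                  exists m, Hd delta = Fin m /\ Rabs (m - r) < eps
    end.

Definition in_W (l : R -> Prop) (a : R) (k : nat) : Prop :=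
  exists x, l x /\
    ((/ 2 ^ (S k) <= x - a <= / 2 ^ k) \/ (- / 2 ^ k <= x - a <= - / 2 ^ (S k))).

Fixpoint count_upto (P : nat -> Prop) (n : nat) : nat :=
  match n with
  | O => O
  | S m => (count_upto P m + if excluded_middle_informative (P (S m)) then 1 else 0)%nat
  end.

Definition countW (l : R -> Prop) (a : R) (N : nat) : nat := count_upto (in_W l a) N.

Definition little_o (u v : nat -> R) : Prop :=
  forall eps, 0 < eps -> exists N0, forall N, (N0 <= N)%nat -> Rabs (u N) <= eps * Rabs (v N).

Definition gauge_of_f (f : R -> R) (x : R) : R :=
  if Rle_dec x 0 then 0 else exp (- f (1 - ln x / ln 2)).

Definition gauge_sigma (sigma : R) (x : R) : R :=
  if Rle_dec x 0 then 0 else exp (- Rpower (- ln x) sigma).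

Definition power_gauge (s : R) (x : R) : R :=
  if Rle_dec x 0 then 0 else Rpower x s.

Definition is_dimH (F : R -> Prop) (d : R) : Prop :=
  is_glb (fun s => 0 < s /\ is_Hmeasure (power_gauge s) F (Fin 0)) d.

From Stdlib Require Import Reals Lra Lia ClassicalEpsilon List
  FunctionalExtensionality PropExtensionality ZArith.
Open Scope R_scope.

(** Proof of Proposition 4.3.  We prove the stronger statement that
    H^g(l) = 0 (Theorem [Hmeasure_zero_of_sparse_W]) whenever g >= 0, g 0 = 0,
    g(2^(1-N)) <= exp (- c F(N)) for large N, and #(W(l,a) ∩ [1,N]) = o(F(N))
    for every a in l; the three parts of the proposition are instances.

    The heart is a combinatorial packing bound ([shell_sparse_length]): a
    2^-N-separated finite set P ⊂ [0,1] such that every b in P sees points of P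
    in at most M/2 of the dyadic shells 2^(1-k) <= |x - b| < 2^(2-k) has at most
    2^M points.  It is proved by induction, splitting P according to the shell
    of x - min P.  Since the shells seen from b are essentially W(l,b), this
    gives |P| <= 64 * 4^x whenever #(W(l,b) ∩ [1,N]) <= x on P ([separated_length_le]).

    For the measure estimate, l is the increasing union of the sets E_M where
    #(W(l,a) ∩ [1,N]) <= (c/4) F(N) for all N >= M.  Each E_M is covered by
    2^-N-balls around a maximal separated subset ([maximal_separated_cover]),
    or is finite if F stays bounded ([finite_set_cover]); concatenating these
    finite covers with budgets eps/2^(M+2) gives delta-covers of l of total cost
    <= eps/2 ([concat_covers]), for every delta > 0. *)

Lemma count_upto_mono (P Q : nat -> Prop) n :
  (forall k, (1 <= k <= n)%nat -> P k -> Q k) ->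
  (count_upto P n <= count_upto Q n)%nat.
Proof.
  induction n as [|n IH]; intros H; simpl; [lia|].
  specialize (IH (fun k Hk => H k ltac:(lia))).
  destruct (excluded_middle_informative (P (S n))) as [p|p];
  destruct (excluded_middle_informative (Q (S n))) as [q|q]; try lia.
  exfalso; apply q, H; auto; lia.
Qed.

Lemma count_upto_mono_n P n n' :
  (n <= n')%nat -> (count_upto P n <= count_upto P n')%nat.
Proof. induction 1; simpl; lia. Qed.

Lemma count_upto_le_n P n : (count_upto P n <= n)%nat.
Proof.
  induction n; simpl; [lia|].
  destruct (excluded_middle_informative _); lia.
Qed.

Lemma count_upto_or_le (P Q : nat -> Prop) n :
  (count_upto (fun k => P k \/ Q k) n <= count_upto P n + count_upto Q n)%nat.
Proof.
  induction n; simpl; [lia|].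
  destruct (excluded_middle_informative (P (S n)));
  destruct (excluded_middle_informative (Q (S n)));
  destruct (excluded_middle_informative (P (S n) \/ Q (S n))); try tauto; lia.
Qed.

Lemma count_upto_disj (P Q : nat -> Prop) n :
  (forall k, P k -> Q k -> False) ->
  count_upto (fun k => P k \/ Q k) n = (count_upto P n + count_upto Q n)%nat.
Proof.
  intros Hdisj. induction n; simpl; [lia|]. rewrite IHn.
  destruct (excluded_middle_informative (P (S n)));
  destruct (excluded_middle_informative (Q (S n)));
  destruct (excluded_middle_informative (P (S n) \/ Q (S n)));
  try tauto; try lia. exfalso; eauto.
Qed.

Lemma count_upto_single k0 n :
  (1 <= k0 <= n)%nat -> (1 <= count_upto (fun k => k = k0) n)%nat.
Proof.
  induction n; intros Hk; simpl; [lia|].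
  destruct (excluded_middle_informative (S n = k0)); [lia|].
  specialize (IHn ltac:(lia)); lia.
Qed.

Lemma count_upto_stable (P : nat -> Prop) n :
  ~ P (S n) -> count_upto P (S n) = count_upto P n.
Proof. intros H; simpl; destruct (excluded_middle_informative (P (S n))); [tauto|lia]. Qed.

Lemma count_upto_shift1 (Q : nat -> Prop) n :
  (count_upto (fun k => Q (S k)) n <= count_upto Q (S n))%nat.
Proof.
  induction n; simpl in *; [lia|].
  destruct (excluded_middle_informative (Q (S (S n)))); lia.
Qed.

Lemma count_upto_shift2 (Q : nat -> Prop) n :
  count_upto (fun k => (3 <= k)%nat /\ Q (k - 2)%nat) (n + 2) = count_upto Q n.
Proof.
  induction n.
  - simpl. destruct (excluded_middle_informative _) as [[? _]|]; [lia|].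
    destruct (excluded_middle_informative _) as [[? _]|]; lia.
  - replace (S n + 2)%nat with (S (n + 2)) by lia. simpl. rewrite IHn.
    replace (n + 2 - 1)%nat with (S n) by lia.
    destruct (excluded_middle_informative _) as [[_ h]|h];
    destruct (excluded_middle_informative (Q (S n))) as [h'|h']; try lia; try tauto.
    exfalso; apply h; split; [lia|exact h'].
Qed.

Lemma count_upto_restrict (Q : nat -> Prop) K n :
  (K <= n)%nat -> count_upto (fun j => Q j /\ (j <= K)%nat) n = count_upto Q K.
Proof.
  induction 1.
  - apply Nat.le_antisymm; apply count_upto_mono; intros; intuition lia.
  - rewrite count_upto_stable; auto. intros [_ H']; lia.
Qed.

Lemma count_upto_le2 n : (count_upto (fun k => (k <= 2)%nat) n <= 2)%nat.
Proof.
  eapply Nat.le_trans; [apply (count_upto_mono_n _ n (Nat.max n 2)); lia|].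
  eapply Nat.le_trans;
    [apply (count_upto_mono _ (fun j => True /\ (j <= 2)%nat)); tauto|].
  rewrite count_upto_restrict by lia. apply count_upto_le_n.
Qed.

Lemma half_pow_pos k : 0 < (/2)^k.
Proof. apply pow_lt; lra. Qed.

Lemma half_pow_S k : (/2)^(S k) = (/2)^k / 2.
Proof. simpl; field. Qed.

Lemma half_pow_le j k : (j <= k)%nat -> (/2)^k <= (/2)^j.
Proof. induction 1; [lra|]. rewrite half_pow_S. pose proof (half_pow_pos m); lra. Qed.

Lemma half_pow_small (y : R) : 0 < y -> exists N0, forall n, (N0 <= n)%nat -> (/2)^n < y.
Proof.
  intros Hy. destruct (pow_lt_1_zero (/2) ltac:(rewrite Rabs_right; lra) y Hy) as [N0 HN].
  exists N0. intros n Hn. specialize (HN n Hn).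
  rewrite Rabs_right in HN; [auto|left; apply half_pow_pos].
Qed.

Definition shell (k : nat) (d : R) : Prop := 2 * (/2)^k <= d < 4 * (/2)^k.

Lemma shell_exists N : forall d, (/2)^N <= d <= 1 ->
  exists k, (1 <= k <= S N)%nat /\ shell k d.
Proof.
  unfold shell. induction N; intros d Hd.
  - exists 1%nat. split; [lia|]. simpl in *; lra.
  - destruct (Rle_dec (/2) d).
    + destruct (Rle_dec 1 d); [exists 1%nat|exists 2%nat]; split; try lia; simpl; lra.
    + destruct (IHN (2 * d)) as [k [Hk Hs]]; [rewrite half_pow_S in Hd; lra|].
      exists (S k); split; [lia|]. rewrite half_pow_S; lra.
Qed.

Lemma shell_deeper j k d : shell j d -> d < 2 * (/2)^k -> (k < j)%nat.
Proof.
  intros [H1 _] H. destruct (Nat.lt_ge_cases k j) as [|Hjk]; auto.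
  pose proof (half_pow_le j k Hjk). lra.
Qed.

Definition shellb (k : nat) (d : R) : bool :=
  if Rle_dec (2 * (/2)^k) d then if Rlt_dec d (4 * (/2)^k) then true else false
  else false.

Lemma shellb_iff k d : shellb k d = true <-> shell k d.
Proof.
  unfold shellb, shell.
  destruct (Rle_dec (2 * (/2)^k) d); [destruct (Rlt_dec d (4 * (/2)^k))|];
    split; intros; try tauto; try discriminate; lra.
Qed.

Fixpoint sep (h : R) (L : list R) : Prop :=
  match L with
  | nil => True
  | x :: L' => (forall y, In y L' -> h <= Rabs (x - y)) /\ sep h L'
  end.

Lemma sep_In h L x y : sep h L -> In x L -> In y L -> x <> y -> h <= Rabs (x - y).
Proof.
  induction L as [|z L IH]; simpl; [tauto|]. intros [H1 H2] [->|Hx] [->|Hy] Hne.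
  - congruence.
  - auto.
  - rewrite Rabs_minus_sym; auto.
  - auto.
Qed.

Lemma sep_filter h (p : R -> bool) L : sep h L -> sep h (filter p L).
Proof.
  induction L as [|z L IH]; simpl; auto. intros [H1 H2].
  destruct (p z); simpl; auto. split; auto.
  intros y Hy. apply filter_In in Hy. apply H1; tauto.
Qed.

Lemma sep_mono h h' P : h <= h' -> sep h' P -> sep h P.
Proof.
  intros H. induction P as [|z P IH]; simpl; auto. intros [H1 H2]; split; auto.
  intros y Hy; specialize (H1 y Hy); lra.
Qed.

Lemma sep_of_NoDup P : NoDup P -> exists d, 0 < d /\ sep d P.
Proof.
  induction 1 as [|z P Hz HP IH].
  - exists 1; simpl; split; auto; lra.
  - destruct IH as [d [Hd Hs]].
    assert (Hgap : exists e, 0 < e /\ forall y, In y P -> e <= Rabs (z - y)).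
    { clear - Hz. induction P as [|w P IHP].
      - exists 1; simpl; split; [lra|tauto].
      - destruct IHP as [e [He Hm]]; [intro; apply Hz; right; auto|].
        exists (Rmin e (Rabs (z - w))). split.
        + apply Rmin_glb_lt; auto. apply Rabs_pos_lt. intro. apply Hz. left. lra.
        + intros y [<-|Hy]; [apply Rmin_r|]. eapply Rle_trans; [apply Rmin_l|auto]. }
    destruct Hgap as [e [He Hm]].
    exists (Rmin d e). split; [apply Rmin_glb_lt; auto|]. simpl. split.
    + intros y Hy. eapply Rle_trans; [apply Rmin_r|auto].
    + eapply sep_mono; [apply Rmin_l|auto].
Qed.

Definition eqb_R (a x : R) : bool := if Req_EM_T x a then true else false.

Lemma sep_count_eq h a L : 0 < h -> sep h L -> (length (filter (eqb_R a) L) <= 1)%nat.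
Proof.
  intros Hh. induction L as [|z L IH]; simpl; [lia|]. intros [H1 H2].
  unfold eqb_R at 1. destruct (Req_EM_T z a) as [->|]; auto. simpl.
  destruct (filter (eqb_R a) L) as [|r L'] eqn:E; simpl; [lia|]. exfalso.
  assert (Hr : In r (filter (eqb_R a) L)) by (rewrite E; left; auto).
  apply filter_In in Hr. destruct Hr as [Hr Hb]. unfold eqb_R in Hb.
  destruct (Req_EM_T r a) as [->|]; [|discriminate]. specialize (H1 a Hr).
  rewrite Rminus_diag, Rabs_R0 in H1. lra.
Qed.

Lemma list_min (L : list R) : L <> nil -> exists a, In a L /\ forall x, In x L -> a <= x.
Proof.
  induction L as [|z L IH]; [congruence|]. intros _.
  destruct L as [|w L'].
  - exists z; simpl; split; auto. intros x [->|[]]; lra.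
  - destruct IH as [a [Ha Hm]]; [congruence|].
    destruct (Rle_dec z a).
    + exists z; split; [left; auto|]. intros x [->|Hx]; [lra|]. specialize (Hm x Hx); lra.
    + exists a; split; [right; auto|]. intros x [->|Hx]; [lra|]. auto.
Qed.

Lemma filter_length_lt (p : R -> bool) L a :
  In a L -> p a = false -> (length (filter p L) < length L)%nat.
Proof.
  induction L as [|z L IH]; simpl; [tauto|]. intros [->|H] Hp.
  - rewrite Hp. pose proof (filter_length_le p L). lia.
  - destruct (p z); simpl; specialize (IH H Hp); lia.
Qed.

Fixpoint ssum (F : nat -> R) (L : nat) : R :=
  match L with O => 0 | S L' => ssum F L' + F L' end.

Lemma ssum_le F G L : (forall j, (j < L)%nat -> F j <= G j) -> ssum F L <= ssum G L.
Proof.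
  induction L; simpl; intros H; [lra|].
  pose proof (IHL (fun j Hj => H j ltac:(lia))). pose proof (H L ltac:(lia)). lra.
Qed.

Lemma ssum_ext F G L : (forall j, (j < L)%nat -> F j = G j) -> ssum F L = ssum G L.
Proof.
  intros H; apply Rle_antisym; apply ssum_le; intros j Hj; rewrite (H j Hj); lra.
Qed.

Lemma ssum_nonneg F L : (forall j, 0 <= F j) -> 0 <= ssum F L.
Proof. intros H; induction L; simpl; [lra|]. pose proof (H L); lra. Qed.

Lemma ssum_scal c F L : ssum (fun j => c * F j) L = c * ssum F L.
Proof. induction L; simpl; [ring|]. rewrite IHL; ring. Qed.

Lemma ssum_plus F G L : ssum (fun j => F j + G j) L = ssum F L + ssum G L.
Proof. induction L; simpl; [ring|]. rewrite IHL; ring. Qed.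

Lemma ssum_const v L : ssum (fun _ => v) L = INR L * v.
Proof. induction L; simpl ssum; [simpl; ring|]. rewrite IHL, S_INR; ring. Qed.

Lemma ssum_ge_term F L j : (j < L)%nat -> (forall i, 0 <= F i) -> F j <= ssum F L.
Proof.
  induction L; intros Hj HF; [lia|]. simpl.
  pose proof (ssum_nonneg F L HF). pose proof (HF L).
  destruct (Nat.eq_dec j L) as [->|]; [lra|]. pose proof (IHL ltac:(lia) HF). lra.
Qed.

Lemma ssum_prefix F a b : (a <= b)%nat -> (forall j, 0 <= F j) -> ssum F a <= ssum F b.
Proof. induction 1; intros HF; [lra|]. simpl. pose proof (HF m). pose proof (IHle HF). lra. Qed.

Definition sumk (F : nat -> R) (K : nat) : R := ssum (fun j => F (S j)) K.

Lemma sumk_S F K : sumk F (S K) = sumk F K + F (S K).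
Proof. reflexivity. Qed.

Lemma sumk_le F G K : (forall k, (1 <= k <= K)%nat -> F k <= G k) -> sumk F K <= sumk G K.
Proof. intros H. apply ssum_le. intros j Hj. apply H; lia. Qed.

(** If the indices k with [ne k] are weighted by 2^-(number of earlier such
    indices, skipping the immediately preceding one), the total weight is < 3:
    each exponent value is used by at most two indices. *)
Lemma sparse_geometric_sum (ne : nat -> Prop) K :
  sumk (fun k => if excluded_middle_informative (ne k)
                 then (/2)^(count_upto ne (k-2)) else 0) K
  <= 3 - (/2)^(count_upto ne (K-1)) - 2 * (/2)^(count_upto ne K).
Proof.
  induction K.
  - unfold sumk; simpl. lra.
  - rewrite sumk_S. replace (S K - 2)%nat with (K - 1)%nat by lia.
    replace (S K - 1)%nat with K by lia.
    set (u := count_upto ne (K-1)) in *. set (v := count_upto ne K) in *.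
    assert (Huv : v = u \/ v = S u).
    { unfold u, v. destruct K; simpl; [auto|].
      replace (K - 0)%nat with K by lia.
      destruct (excluded_middle_informative (ne (S K))); [right|left]; lia. }
    simpl count_upto. fold v.
    pose proof (half_pow_pos u). pose proof (half_pow_pos v).
    destruct (excluded_middle_informative (ne (S K))).
    + replace (v + 1)%nat with (S v) by lia. rewrite half_pow_S.
      destruct Huv as [-> | ->]; [lra|]. rewrite half_pow_S in *. lra.
    + replace (v + 0)%nat with v by lia.
      assert ((/2)^v <= (/2)^u) by (apply half_pow_le; lia). lra.
Qed.

(** * The packing bound *)

Definition sees (P : list R) (b : R) (k : nat) : Prop :=
  exists x, In x P /\ shell k (Rabs (x - b)).

Definition nshells (N : nat) (P : list R) (b : R) : nat := count_upto (sees P b) (S N).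

Definition group (a : R) (P : list R) (j : nat) : list R :=
  filter (fun x => shellb j (x - a)) P.

Lemma group_In a P j x : In x (group a P j) <-> In x P /\ shell j (x - a).
Proof. unfold group. rewrite filter_In, shellb_iff. tauto. Qed.

Lemma length_le_shells a K L :
  (forall x, In x L -> x <> a -> exists k, (1 <= k <= K)%nat /\ shell k (x - a)) ->
  INR (length L) <= INR (length (filter (eqb_R a) L)) +
                    sumk (fun k => INR (length (group a L k))) K.
Proof.
  induction L as [|z L IH]; intros H.
  - pose proof (ssum_nonneg (fun k => INR (length (group a nil (S k)))) K (fun k => pos_INR _)).
    unfold sumk. simpl in *. lra.
  - specialize (IH (fun x Hx => H x (or_intror Hx))).
    set (one := fun k => if shellb k (z - a) then 1 else 0).
    assert (E : sumk (fun k => INR (length (group a (z :: L) k))) K =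
                sumk (fun k => INR (length (group a L k))) K + sumk one K).
    { unfold sumk. rewrite <- ssum_plus. apply ssum_ext; intros j _.
      unfold group, one; simpl. destruct (shellb (S j) (z - a)); simpl length;
        [rewrite S_INR|]; ring. }
    assert (Hone : 0 <= sumk one K).
    { apply ssum_nonneg. intro k; unfold one; destruct (shellb _ _); lra. }
    rewrite E. simpl length at 1. rewrite S_INR. simpl filter. unfold eqb_R at 1.
    destruct (Req_EM_T z a) as [|Hza].
    + simpl length. rewrite S_INR. lra.
    + destruct (H z (or_introl eq_refl) Hza) as [k0 [Hk0 Hs]].
      assert (1 <= sumk one K).
      { replace 1 with (one k0) by (unfold one; apply shellb_iff in Hs; rewrite Hs; auto).
        unfold sumk. replace k0 with (S (k0 - 1)) at 1 by lia.
        apply (ssum_ge_term (fun j => one (S j))); [lia|].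
        intro j; unfold one; destruct (shellb _ _); lra. }
      lra.
Qed.

Section Groups.

Variables (N : nat) (P : list R) (a b : R) (k : nat).
Hypothesis Ha : In a P.
Hypothesis Hmin : forall x, In x P -> a <= x.
Hypothesis Hk : (1 <= k <= S N)%nat.
Hypothesis Hb : In b (group a P k).

(** Seen from b, the group of b occupies only shells deeper than k, a occupies
    shell k, and this leaves the shells below k free for the rest of P. *)
Lemma nshells_split :
  (nshells N (group a P k) b + 1
   + count_upto (fun j => (j <= k - 1)%nat /\ sees P b j) (S N) <= nshells N P b)%nat.
Proof.
  apply group_In in Hb as [HbP Hbs].
  set (C := fun j => (j <= k - 1)%nat /\ sees P b j).
  assert (Hdeep : forall j, sees (group a P k) b j -> (k < j)%nat).
  { intros j [x [Hx Hs]]. apply group_In in Hx as [_ Hxs].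
    apply (shell_deeper j k (Rabs (x - b))); auto.
    unfold shell in *. apply Rabs_def1; lra. }
  assert (Hcount : (count_upto (sees (group a P k) b) (S N) + count_upto (fun j => j = k) (S N)
                     + count_upto C (S N) <= nshells N P b)%nat).
  { unfold nshells. rewrite <- Nat.add_assoc.
    rewrite <- (count_upto_disj (fun j => j = k) C) by (unfold C; intros; lia).
    rewrite <- count_upto_disj
      by (intros j h1 [h2|[h2 _]]; specialize (Hdeep j h1); lia).
    apply count_upto_mono. intros j _ [h|[->|[_ h]]]; auto.
    - destruct h as [x [Hx Hs]]. exists x. split; auto. apply group_In in Hx; tauto.
    - exists a. split; auto.
      rewrite Rabs_minus_sym, Rabs_right; auto. specialize (Hmin b HbP); lra. }
  pose proof (count_upto_single k (S N) Hk). unfold nshells in *. lia.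
Qed.

(** A point x of a nonempty group j <= k-2 lies in shell j or j+1 around b,
    so the nonempty groups below k-1 are at most twice the shells below k
    occupied around b. *)
Lemma nonempty_groups_seen :
  (count_upto (fun j => group a P j <> nil) (k - 2)
   <= 2 * count_upto (fun j => (j <= k - 1)%nat /\ sees P b j) (S N))%nat.
Proof.
  apply group_In in Hb as [HbP Hbs].
  set (C := fun j => (j <= k - 1)%nat /\ sees P b j).
  rewrite <- (count_upto_restrict _ (k - 2) (S N)) by lia.
  eapply Nat.le_trans.
  { apply (count_upto_mono _ (fun j => C j \/ C (S j))).
    intros j Hj [Hne Hjk].
    destruct (group a P j) as [|x G'] eqn:E; [congruence|].
    assert (Hx : In x (group a P j)) by (rewrite E; left; auto).
    apply group_In in Hx as [HxP Hxs].
    assert (Hkj : (/2)^k <= (/2)^j / 4).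
    { replace ((/2)^j / 4) with ((/2)^(S (S j))) by (rewrite !half_pow_S; field).
      apply half_pow_le; lia. }
    unfold shell in *.
    assert (Hd : Rabs (x - b) = x - b) by (apply Rabs_right; lra).
    destruct (Rle_dec (2 * (/2)^j) (x - b)).
    - left. split; [lia|]. exists x; split; auto. rewrite Hd. unfold shell; lra.
    - right. split; [lia|]. exists x; split; auto. rewrite Hd. unfold shell.
      rewrite half_pow_S. lra. }
  eapply Nat.le_trans; [apply count_upto_or_le|].
  pose proof (count_upto_shift1 C (S N)).
  rewrite (count_upto_stable C (S N)) in * by (unfold C; lia).
  lia.
Qed.

Lemma nshells_group :
  (2 * nshells N (group a P k) b + 2 + count_upto (fun j => group a P j <> nil) (k - 2)
   <= 2 * nshells N P b)%nat.
Proof. pose proof nshells_split. pose proof nonempty_groups_seen. lia. Qed.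

End Groups.

Definition shell_sparse (N M : nat) (P : list R) : Prop :=
  sep ((/2)^N) P /\ (forall x, In x P -> 0 <= x <= 1) /\
  (forall b, In b P -> (2 * nshells N P b <= M)%nat).

(** Apart from its minimum a, P is split into the groups 1, ..., N+1. *)
Lemma length_le_groups N M P a :
  shell_sparse N M P -> In a P -> (forall x, In x P -> a <= x) ->
  INR (length P) <= 1 + sumk (fun k => INR (length (group a P k))) (S N).
Proof.
  intros [Hsep [H01 _]] Ha Hmin.
  pose proof (half_pow_pos N) as HhN.
  assert (INR (length (filter (eqb_R a) P)) <= 1)
    by (apply (le_INR _ 1), (sep_count_eq _ a P HhN Hsep)).
  enough (INR (length P) <= INR (length (filter (eqb_R a) P)) +
            sumk (fun k => INR (length (group a P k))) (S N)) by lra.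
  apply length_le_shells. intros x Hx Hxa. apply shell_exists.
  pose proof (sep_In _ P x a Hsep Hx Ha Hxa). pose proof (Hmin x Hx).
  pose proof (H01 x Hx). pose proof (H01 a Ha).
  rewrite Rabs_right in * by lra. lra.
Qed.

Lemma group_shell_sparse N M P a k :
  shell_sparse N M P -> In a P -> (forall x, In x P -> a <= x) ->
  (1 <= k <= S N)%nat -> group a P k <> nil ->
  let s := count_upto (fun j => group a P j <> nil) (k - 2) in
  (2 + s <= M)%nat /\ shell_sparse N (M - 2 - s) (group a P k).
Proof.
  intros [Hsep [H01 Hshells]] Ha Hmin Hk Hne s.
  assert (Hbound : forall b, In b (group a P k) ->
            (2 * nshells N (group a P k) b + 2 + s <= M)%nat).
  { intros b Hb. pose proof (nshells_group N P a b k Ha Hmin Hk Hb).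
    pose proof (Hshells b (proj1 (proj1 (group_In _ _ _ _) Hb))). unfold s. lia. }
  destruct (group a P k) as [|b G] eqn:E; [congruence|].
  rewrite <- E in *. assert (Hb : In b (group a P k)) by (rewrite E; left; auto).
  split; [pose proof (Hbound b Hb); lia|].
  split; [|split].
  - apply sep_filter; auto.
  - intros x Hx. apply group_In in Hx. apply H01; tauto.
  - intros b' Hb'. pose proof (Hbound b' Hb'). lia.
Qed.

Lemma group_length_le N M P a k :
  (forall Q M', (length Q < length P)%nat -> shell_sparse N M' Q -> INR (length Q) <= 2^M') ->
  shell_sparse N M P -> In a P -> (forall x, In x P -> a <= x) ->
  (1 <= k <= S N)%nat -> group a P k <> nil ->
  (2 <= M)%nat /\
  INR (length (group a P k))
    <= 2^M / 4 * (/2)^(count_upto (fun j => group a P j <> nil) (k - 2)).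
Proof.
  intros IH HP Ha Hmin Hk Hne.
  destruct (group_shell_sparse N M P a k HP Ha Hmin Hk Hne) as [Hs Hsparse].
  set (s := count_upto (fun j => group a P j <> nil) (k - 2)) in *.
  split; [lia|].
  replace (2^M / 4 * (/2)^s) with (2^(M - 2 - s)).
  - apply IH; auto. apply (filter_length_lt _ P a Ha).
    destruct (shellb k (a - a)) eqn:T; [exfalso|reflexivity].
    apply shellb_iff in T. unfold shell in T. rewrite Rminus_diag in T.
    pose proof (half_pow_pos k); lra.
  - replace M with ((M - 2 - s) + 2 + s)%nat at 2 by lia.
    rewrite !pow_add, pow_inv. field. apply pow_nonzero; lra.
Qed.

(** Packing bound: a shell-sparse list with budget M has at most 2^M points.
    With a = min P, the groups contribute at most 2^M/4 times the sum of
    [sparse_geometric_sum], which is below 3. *)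
Lemma shell_sparse_length N : forall P M, shell_sparse N M P -> INR (length P) <= 2^M.
Proof.
  intros P. induction P as [P IH] using (induction_ltof1 _ (@length R)).
  unfold ltof in IH. intros M HP.
  destruct P as [|p0 P0] eqn:EP.
  { simpl. pose proof (pow_lt 2 M); lra. }
  rewrite <- EP in *.
  destruct (list_min P) as [a [Ha Hmin]]; [rewrite EP; congruence|].
  set (ne := fun j => group a P j <> nil).
  set (w := fun k => if excluded_middle_informative (ne k)
                     then (/2)^(count_upto ne (k - 2)) else 0).
  assert (Hgroup : forall k, (1 <= k <= S N)%nat ->
            INR (length (group a P k)) <= 2^M / 4 * w k /\ (ne k -> (2 <= M)%nat)).
  { intros k Hk. unfold w. destruct (excluded_middle_informative (ne k)) as [Hn|Hn].
    - pose proof (group_length_le N M P a k (fun Q M' H => IH Q H M') HP Ha Hmin Hk Hn).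
      tauto.
    - split; [|tauto]. unfold ne in Hn. apply NNPP in Hn. rewrite Hn. simpl. lra. }
  pose proof (length_le_groups N M P a HP Ha Hmin) as Hsplit.
  assert (Hsum : sumk (fun k => INR (length (group a P k))) (S N)
                 <= sumk (fun k => 2^M / 4 * w k) (S N))
    by (apply sumk_le; intros k Hk; apply Hgroup, Hk).
  destruct (Nat.lt_ge_cases M 2) as [HM|HM].
  - (* no group can be nonempty *)
    assert (Hzero : sumk (fun k => 2^M / 4 * w k) (S N) = 0).
    { unfold sumk. rewrite <- (Rmult_0_r (INR (S N))), <- ssum_const.
      apply ssum_ext. intros j Hj. unfold w.
      destruct (excluded_middle_informative (ne (S j))) as [Hn|]; [|ring].
      pose proof (proj2 (Hgroup (S j) ltac:(lia)) Hn). lia. }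
    pose proof (pow_R1_Rle 2 M ltac:(lra)). lra.
  - assert (4 <= 2^M) by (replace 4 with (2^2) by (simpl; lra); apply Rle_pow; lra || lia).
    pose proof (sparse_geometric_sum ne (S N)) as Hgeo. fold w in Hgeo.
    pose proof (half_pow_pos (count_upto ne (S N - 1))).
    pose proof (half_pow_pos (count_upto ne (S N))).
    unfold sumk in Hsum, Hgeo. rewrite ssum_scal in Hsum. unfold sumk in Hsplit.
    assert (2^M / 4 * ssum (fun j => w (S j)) (S N) <= 2^M / 4 * 3)
      by (apply Rmult_le_compat_l; lra).
    lra.
Qed.

(** * From occupied shells to W(l, b) *)

(** Shell k >= 3 around b is exactly the dyadic annulus defining k-2 ∈ W(l,b);
    hence, for points of l, at most 2 + #(W(l,b) ∩ [1,N]) shells are occupied. *)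
Lemma nshells_le_countW (l : R -> Prop) N P b :
  (forall y, In y P -> l y) -> (nshells N P b <= 2 + countW l b N)%nat.
Proof.
  intros Hl. unfold nshells, countW.
  eapply Nat.le_trans.
  { apply (count_upto_mono _ (fun k => (k <= 2)%nat \/ ((3 <= k)%nat /\ in_W l b (k - 2)))).
    intros k _ [x [Hx Hs]].
    destruct (Nat.le_gt_cases k 2); [left; auto|right; split; [lia|]].
    exists x; split; auto.
    replace (S (k - 2)) with (k - 1)%nat by lia.
    rewrite <- !pow_inv.
    assert (E1 : (/2)^(k-1) = 2 * (/2)^k).
    { replace k with (S (k-1)) at 2 by lia. rewrite half_pow_S; field. }
    assert (E2 : (/2)^(k-2) = 4 * (/2)^k).
    { replace k with (S (S (k-2))) at 2 by lia. rewrite !half_pow_S; field. }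
    rewrite E1, E2. unfold shell in Hs.
    destruct (Rle_dec 0 (x - b)).
    - rewrite Rabs_right in Hs by lra. left; lra.
    - rewrite Rabs_left in Hs by lra. right; lra. }
  eapply Nat.le_trans; [apply count_upto_or_le|].
  pose proof (count_upto_le2 (S N)).
  pose proof (count_upto_mono_n (fun k => (3 <= k)%nat /\ in_W l b (k - 2))
                (S N) (N + 2) ltac:(lia)) as Hshift.
  rewrite count_upto_shift2 in Hshift. lia.
Qed.

Lemma nat_ceiling (x : R) : 0 <= x ->
  exists K : nat, INR K <= x + 1 /\ forall n, INR n <= x -> (n <= K)%nat.
Proof.
  intros Hx. destruct (archimed x) as [Hu1 Hu2].
  exists (Z.to_nat (up x)). split.
  - rewrite INR_IZR_INZ, Z2Nat.id; [lra|]. apply le_IZR. lra.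
  - intros n Hn. assert (Hlt : IZR (Z.of_nat n) < IZR (up x)) by (rewrite <- INR_IZR_INZ; lra).
    apply lt_IZR in Hlt. lia.
Qed.

Lemma separated_length_le (l : R -> Prop) N (x : R) P :
  0 <= x -> sep ((/2)^N) P ->
  (forall y, In y P -> l y /\ 0 <= y <= 1 /\ INR (countW l y N) <= x) ->
  INR (length P) <= 64 * Rpower 4 x.
Proof.
  intros Hx Hsep HP.
  destruct (nat_ceiling x Hx) as [K [HKx HK]].
  assert (Hsparse : shell_sparse N (2 * (2 + K)) P).
  { split; [auto|split].
    - intros y Hy. apply HP, Hy.
    - intros b Hb. pose proof (nshells_le_countW l N P b (fun y Hy => proj1 (HP y Hy))).
      pose proof (HK _ (proj2 (proj2 (HP b Hb)))). lia. }
  eapply Rle_trans; [apply (shell_sparse_length N P _ Hsparse)|].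
  rewrite pow_mult. replace (2^2) with 4 by (simpl; lra).
  rewrite <- Rpower_pow by lra.
  replace 64 with (Rpower 4 3)
    by (replace 3 with (INR 3) by (simpl; lra); rewrite Rpower_pow by lra; simpl; lra).
  rewrite <- Rpower_plus. apply Rle_Rpower; [lra|].
  rewrite plus_INR. simpl (INR 2). lra.
Qed.

(** * Finite covers *)

Lemma exists_maximal_list (Q : list R -> Prop) B :
  Q nil -> (forall P, Q P -> (length P <= B)%nat) ->
  exists P, Q P /\ forall P', Q P' -> (length P' <= length P)%nat.
Proof.
  intros H0 HB.
  assert (Hstep : forall j, exists P, Q P /\
            forall P', Q P' -> (length P' <= length P + (B - j))%nat).
  { induction j.
    - exists nil. split; auto. intros P' HP'. specialize (HB P' HP'). simpl; lia.
    - destruct IHj as [P [HP Hm]].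
      destruct (classic (exists P', Q P' /\ (length P + (B - S j) < length P')%nat))
        as [[P' [HP' Hl]]|Hn].
      + exists P'. split; auto. intros P'' HP''. specialize (Hm P'' HP''). lia.
      + exists P. split; auto. intros P' HP'.
        destruct (Nat.le_gt_cases (length P') (length P + (B - S j))); auto.
        exfalso; apply Hn; eauto. }
  destruct (Hstep B) as [P [HP Hm]]. exists P. split; auto.
  intros P' HP'. specialize (Hm P' HP'). lia.
Qed.

Lemma has_diam_ext (U V : R -> Prop) d :
  (forall x, U x <-> V x) -> has_diam V d -> has_diam U d.
Proof.
  intros H. replace U with V; auto.
  apply functional_extensionality; intro x; apply propositional_extensionality; firstorder.
Qed.

Lemma has_diam_empty (U : R -> Prop) : (forall x, ~ U x) -> has_diam U 0.
Proof. intros H; left; auto. Qed.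

Lemma has_diam_single c : has_diam (fun x => x = c) 0.
Proof.
  right. split.
  - intros t [x [y [-> [-> ->]]]]. rewrite Rminus_diag, Rabs_R0; lra.
  - intros b Hb. apply Hb. exists c, c. rewrite Rminus_diag, Rabs_R0; auto.
Qed.

Lemma has_diam_ball c r : 0 <= r -> has_diam (fun x => Rabs (x - c) <= r) (2 * r).
Proof.
  intros Hr. right. split.
  - intros t [x [y [Hx [Hy ->]]]].
    replace (x - y) with ((x - c) + - (y - c)) by ring.
    eapply Rle_trans; [apply Rabs_triang|]. rewrite Rabs_Ropp. lra.
  - intros b Hb. apply Hb. exists (c + r), (c - r).
    repeat split; try (apply Rabs_le; lra).
    replace (c + r - (c - r)) with (2 * r) by ring. rewrite Rabs_right; lra.
Qed.

Definition fin_cover (g : R -> R) (E : R -> Prop) (delta r : R) : Prop :=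
  exists (L : nat) (V : nat -> R -> Prop) (e : nat -> R),
    (1 <= L)%nat /\ (forall j, has_diam (V j) (e j) /\ e j < delta) /\
    (forall x, E x -> exists j, (j < L)%nat /\ V j x) /\
    ssum (fun j => g (e j)) L <= r.

Lemma fin_cover_mono g E d r r' : r <= r' -> fin_cover g E d r -> fin_cover g E d r'.
Proof.
  intros H [L [V [e [H1 [H2 [H3 H4]]]]]].
  exists L, V, e. split; [auto|split; [auto|split; [auto|lra]]].
Qed.

(** Covering E by the 2^-N-balls around a maximal 2^-N-separated subset of E,
    whose size is controlled by [separated_length_le]. *)
Lemma maximal_separated_cover (g : R -> R) (l E : R -> Prop) N x delta :
  (forall y, 0 <= g y) -> g 0 = 0 -> 0 <= x -> 2 * (/2)^N < delta ->
  (forall y, E y -> l y /\ 0 <= y <= 1 /\ INR (countW l y N) <= x) ->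
  fin_cover g E delta (64 * Rpower 4 x * g (2 * (/2)^N)).
Proof.
  intros Hg0 Hg Hx Hd HE.
  set (h := (/2)^N). pose proof (half_pow_pos N) as Hh. fold h in Hh, Hd.
  set (Q := fun P => sep h P /\ forall y, In y P -> E y).
  assert (Hlen : forall P, Q P -> INR (length P) <= 64 * Rpower 4 x)
    by (intros P [Hs HE']; exact (separated_length_le l N x P Hx Hs (fun y Hy => HE y (HE' y Hy)))).
  destruct (nat_ceiling (64 * Rpower 4 x)) as [B [_ HB]].
  { pose proof (exp_pos (x * ln 4)). unfold Rpower. lra. }
  destruct (exists_maximal_list Q B) as [P [[HPs HPE] HPm]].
  { split; simpl; tauto. }
  { intros P HP. apply HB, Hlen, HP. }
  exists (S (length P)), (fun j y => (j < length P)%nat /\ Rabs (y - nth j P 0) <= h),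
    (fun j => if lt_dec j (length P) then 2 * h else 0).
  split; [lia|]. split; [|split].
  - intros j. destruct (lt_dec j (length P)).
    + split; [|lra]. apply (has_diam_ext _ (fun y => Rabs (y - nth j P 0) <= h)).
      { intro y; tauto. } apply has_diam_ball; lra.
    + split; [|lra]. apply has_diam_empty. intros y [Hj _]; tauto.
  - intros y Hy.
    destruct (classic (exists p, In p P /\ Rabs (y - p) < h)) as [[p [Hp Hyp]]|Hn].
    + destruct (In_nth P p 0 Hp) as [j [Hj Hnth]]. exists j. split; [lia|]. split; auto.
      rewrite Hnth; lra.
    + (* otherwise y could be added to P, contradicting maximality *)
      exfalso. assert (Hy' : Q (y :: P)).
      { split.
        - simpl. split; auto. intros z Hz. destruct (Rle_dec h (Rabs (y - z))); auto.
          exfalso; apply Hn. exists z; split; auto; lra.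
        - intros z [<-|Hz]; auto. }
      specialize (HPm _ Hy'). simpl in HPm. lia.
  - simpl ssum. destruct (lt_dec (length P) (length P)); [lia|]. rewrite Hg, Rplus_0_r.
    rewrite (ssum_ext _ (fun _ => g (2 * h)))
      by (intros j Hj; destruct (lt_dec j (length P)); [auto|lia]).
    rewrite ssum_const. apply Rmult_le_compat_r; [apply Hg0|]. apply Hlen. split; auto.
Qed.

(** A set with boundedly many distinct points is covered by singletons, at
    cost 0. *)
Lemma finite_set_cover (g : R -> R) (E : R -> Prop) delta B :
  g 0 = 0 -> 0 < delta ->
  (forall P, NoDup P -> (forall y, In y P -> E y) -> (length P <= B)%nat) ->
  fin_cover g E delta 0.
Proof.
  intros Hg Hd HB.
  destruct (exists_maximal_list (fun P => NoDup P /\ forall y, In y P -> E y) B)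
    as [P [[HPn HPE] HPm]].
  { split; [constructor|simpl; tauto]. }
  { intros P [H1 H2]; auto. }
  exists (S (length P)), (fun j y => (j < length P)%nat /\ y = nth j P 0), (fun _ => 0).
  split; [lia|]. split; [|split].
  - intros j. split; auto. destruct (lt_dec j (length P)).
    + apply (has_diam_ext _ (fun y => y = nth j P 0)); [intro; tauto|apply has_diam_single].
    + apply has_diam_empty. intros y [Hj _]; tauto.
  - intros y Hy. destruct (In_dec Req_EM_T y P) as [Hin|Hn].
    + destruct (In_nth P y 0 Hin) as [j [Hj Hnth]]. exists j. split; [lia|]. auto.
    + exfalso. assert (Hy' : NoDup (y :: P) /\ forall z, In z (y :: P) -> E z).
      { split; [constructor; auto|]. intros z [<-|Hz]; auto. }
      specialize (HPm _ Hy'). simpl in HPm. lia.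
  - rewrite ssum_const, Hg. lra.
Qed.

(** * Concatenating countably many finite covers *)

(** [block_pos Lf i] = (M, j): the i-th term of the concatenation of blocks of
    lengths Lf 0, Lf 1, ... is the j-th term of block M. *)
Fixpoint block_pos (Lf : nat -> nat) (i : nat) : nat * nat :=
  match i with
  | O => (0%nat, 0%nat)
  | S i' => let (M, j) := block_pos Lf i' in
            if Nat.ltb (S j) (Lf M) then (M, S j) else (S M, 0%nat)
  end.

Section Blocks.

Variable Lf : nat -> nat.
Hypothesis HLf : forall M, (1 <= Lf M)%nat.

Lemma block_pos_valid i : (snd (block_pos Lf i) < Lf (fst (block_pos Lf i)))%nat.
Proof.
  induction i; simpl; [apply HLf|].
  destruct (block_pos Lf i) as [M j]. simpl in IHi.
  destruct (Nat.ltb (S j) (Lf M)) eqn:E; simpl; [apply Nat.ltb_lt in E; auto|apply HLf].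
Qed.

Lemma block_pos_step i M : block_pos Lf i = (M, 0%nat) ->
  forall t, (t < Lf M)%nat -> block_pos Lf (i + t) = (M, t).
Proof.
  intros Hi. induction t; intros Ht; [rewrite Nat.add_0_r; auto|].
  replace (i + S t)%nat with (S (i + t)) by lia. simpl. rewrite IHt by lia.
  destruct (Nat.ltb (S t) (Lf M)) eqn:E; auto. apply Nat.ltb_ge in E; lia.
Qed.

Lemma block_pos_reach M : exists i, block_pos Lf i = (M, 0%nat).
Proof.
  induction M as [|M [i Hi]]; [exists 0%nat; auto|].
  exists (S (i + (Lf M - 1))). simpl.
  rewrite (block_pos_step i M Hi) by (specialize (HLf M); lia).
  destruct (Nat.ltb (S (Lf M - 1)) (Lf M)) eqn:E; auto.
  apply Nat.ltb_lt in E. specialize (HLf M). lia.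
Qed.

Lemma block_pos_sum (h : nat -> nat -> R) n :
  sum_f_R0 (fun i => h (fst (block_pos Lf i)) (snd (block_pos Lf i))) n =
  ssum (fun M => ssum (h M) (Lf M)) (fst (block_pos Lf n))
  + ssum (h (fst (block_pos Lf n))) (S (snd (block_pos Lf n))).
Proof.
  induction n; [simpl; ring|].
  simpl sum_f_R0. rewrite IHn. pose proof (block_pos_valid n) as Hv. simpl block_pos.
  destruct (block_pos Lf n) as [M j]. simpl in *.
  destruct (Nat.ltb (S j) (Lf M)) eqn:E; simpl; [ring|].
  apply Nat.ltb_ge in E. replace (Lf M) with (S j) by lia. simpl ssum. ring.
Qed.

Lemma block_partial_sum_le (h : nat -> nat -> R) eps :
  (forall M j, 0 <= h M j) -> (forall M, ssum (h M) (Lf M) <= eps * (/2)^(S (S M))) ->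
  forall n, sum_f_R0 (fun i => h (fst (block_pos Lf i)) (snd (block_pos Lf i))) n <= eps / 2.
Proof.
  intros Hh Hblock n. rewrite block_pos_sum.
  set (M := fst (block_pos Lf n)). set (j := snd (block_pos Lf n)).
  assert (ssum (h M) (S j) <= ssum (h M) (Lf M))
    by (apply ssum_prefix; [apply block_pos_valid|apply Hh]).
  assert (Hgeo : forall K, ssum (fun M => eps * (/2)^(S (S M))) K = eps / 2 - eps / 2 * (/2)^K).
  { induction K; [simpl; field|].
    change (ssum (fun M => eps * (/2)^(S (S M))) K + eps * (/2)^(S (S K))
            = eps / 2 - eps / 2 * (/2)^(S K)).
    rewrite IHK. simpl. field. }
  assert (ssum (fun M => ssum (h M) (Lf M)) (S M) <= ssum (fun M => eps * (/2)^(S (S M))) (S M))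
    by (apply ssum_le; intros M' _; apply Hblock).
  rewrite Hgeo in H0. simpl ssum in H0.
  assert (Heps : 0 <= eps).
  { pose proof (ssum_nonneg (h 0%nat) (Lf 0%nat) (Hh 0%nat)). pose proof (Hblock 0%nat).
    pose proof (half_pow_pos 2). simpl in *. nra. }
  pose proof (half_pow_pos (S M)).
  assert (0 <= eps / 2 * (/2)^(S M)) by (apply Rmult_le_pos; lra).
  pose proof (Hblock M). lra.
Qed.

End Blocks.

Lemma nonneg_series_bounded (u : nat -> R) B :
  (forall i, 0 <= u i) -> (forall n, sum_f_R0 u n <= B) ->
  exists s, infinite_sum u s /\ s <= B.
Proof.
  intros Hu HB.
  assert (Hgrow : Un_growing (sum_f_R0 u)).
  { intro n. simpl. pose proof (Hu (S n)). lra. }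
  destruct (growing_cv _ Hgrow) as [s Hs]; [exists B; intros x [n ->]; auto|].
  exists s. split; [exact Hs|].
  destruct (Rle_dec s B) as [|Hn]; auto. exfalso.
  destruct (Hs (s - B) ltac:(lra)) as [N HN].
  specialize (HN N (Nat.le_refl _)). specialize (HB N).
  unfold Rdist in HN. apply Rabs_def2 in HN. lra.
Qed.

Lemma concat_covers (g : R -> R) (F : R -> Prop) (E : nat -> R -> Prop) delta eps :
  (forall y, 0 <= g y) -> (forall x, F x -> exists M, E M x) ->
  (forall M, fin_cover g (E M) delta (eps * (/2)^(S (S M)))) ->
  exists s, cover_sum g F delta s /\ s <= eps / 2.
Proof.
  intros Hg HF Hcov.
  destruct (choice (fun M (t : nat * (nat -> R -> Prop) * (nat -> R)) =>
      (1 <= fst (fst t))%nat /\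
      (forall j, has_diam (snd (fst t) j) (snd t j) /\ snd t j < delta) /\
      (forall x, E M x -> exists j, (j < fst (fst t))%nat /\ snd (fst t) j x) /\
      ssum (fun j => g (snd t j)) (fst (fst t)) <= eps * (/2)^(S (S M))))
    as [t Ht].
  { intros M. destruct (Hcov M) as [L [V [e H]]]. exists (L, V, e). exact H. }
  set (Lf := fun M => fst (fst (t M))). set (Vf := fun M => snd (fst (t M))).
  set (ef := fun M => snd (t M)).
  assert (HL : forall M, (1 <= Lf M)%nat) by (intro M; apply (Ht M)).
  set (V := fun i => Vf (fst (block_pos Lf i)) (snd (block_pos Lf i))).
  set (e := fun i => ef (fst (block_pos Lf i)) (snd (block_pos Lf i))).
  destruct (nonneg_series_bounded (fun i => g (e i)) (eps / 2)) as [s [Hs Hsle]].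
  { intro; apply Hg. }
  { apply (block_partial_sum_le Lf HL (fun M j => g (ef M j))); [intros; apply Hg|].
    intro M. apply (Ht M). }
  exists s. split; auto. exists V, e. split; [|split; auto].
  - intro i. apply (Ht (fst (block_pos Lf i))).
  - intros x Hx. destruct (HF x Hx) as [M HM].
    destruct (proj1 (proj2 (proj2 (Ht M))) x HM) as [j [Hj Hjx]].
    destruct (block_pos_reach Lf HL M) as [i Hi].
    exists (i + j)%nat. unfold V. rewrite (block_pos_step Lf i M Hi j Hj). exact Hjx.
Qed.

(** * Hausdorff measure zero *)

Lemma Hmeasure_zero_of_small_covers (g : R -> R) (F : R -> Prop) :
  (forall y, 0 <= g y) ->
  (forall delta eps, 0 < delta -> 0 < eps -> exists s, cover_sum g F delta s /\ s <= eps) ->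
  is_Hmeasure g F (Fin 0).
Proof.
  intros Hg Hsmall. exists (fun _ => Fin 0). split.
  - intros delta Hd. simpl. split.
    + intros s [U [d [_ [_ Hsum]]]]. destruct (Rle_dec 0 s) as [|Hn]; auto. exfalso.
      destruct (Hsum (- s) ltac:(lra)) as [N HN]. specialize (HN N (Nat.le_refl _)).
      pose proof (cond_pos_sum (fun i => g (d i)) N (fun i => Hg _)).
      unfold Rdist in HN. apply Rabs_def2 in HN. lra.
    + intros b Hb. destruct (Rle_dec b 0) as [|Hn]; auto. exfalso.
      destruct (Hsmall delta (b / 2) Hd ltac:(lra)) as [s [Hs Hs2]].
      specialize (Hb s Hs). lra.
  - intros eps He. exists 1. split; [lra|]. intros delta _. exists 0. split; auto.
    rewrite Rminus_diag, Rabs_R0; auto.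
Qed.

Lemma exp_le_mono a b : a <= b -> exp a <= exp b.
Proof. intros [H|H]; [left; apply exp_increasing; auto|rewrite H; lra]. Qed.

Lemma ln2_lt_1 : ln 2 < 1.
Proof.
  rewrite <- (ln_exp 1). apply ln_increasing; [lra|].
  pose proof (exp_ineq1 1 ltac:(lra)). lra.
Qed.

(** 4^(t/4) <= e^(t/2), since ln 4 < 2. *)
Lemma four_pow_le_exp t : 0 <= t -> Rpower 4 (t / 4) <= exp (t / 2).
Proof.
  intros Ht. unfold Rpower. apply exp_le_mono.
  replace 4 with (2 * 2) at 2 by ring. rewrite ln_mult by lra.
  pose proof ln2_lt_1. pose proof ln_lt_2. nra.
Qed.

Lemma little_o_eventually_le (u F : nat -> R) eta :
  little_o u F -> (forall N, 0 <= F N) -> 0 < eta ->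
  exists N0, forall N, (N0 <= N)%nat -> u N <= eta * F N.
Proof.
  intros Ho HF He. destruct (Ho eta He) as [N0 HN0]. exists N0.
  intros N HN. specialize (HN0 N HN). rewrite (Rabs_right (F N)) in HN0 by (apply Rle_ge, HF).
  pose proof (Rle_abs (u N)). lra.
Qed.

Section Sparse_W.

Variables (l : R -> Prop) (g : R -> R) (F : nat -> R) (c : R) (Ng : nat).
Hypothesis Hl01 : forall x, l x -> 0 <= x <= 1.
Hypothesis Hg_nonneg : forall y, 0 <= g y.
Hypothesis Hg0 : g 0 = 0.
Hypothesis Hc : 0 < c.
Hypothesis HF : forall N, 0 <= F N.
Hypothesis Hg_small : forall N, (Ng <= N)%nat -> g (2 * (/2)^N) <= exp (- (c * F N)).

Definition W_sparse_from (M : nat) (a : R) : Prop :=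
  l a /\ forall N, (M <= N)%nat -> INR (countW l a N) <= c / 4 * F N.

Lemma cF_nonneg N : 0 <= c * F N.
Proof. pose proof (HF N). nra. Qed.

Lemma W_sparse_from_counts M N y : (M <= N)%nat -> W_sparse_from M y ->
  l y /\ 0 <= y <= 1 /\ INR (countW l y N) <= c / 4 * F N.
Proof. intros HN [Hy HyN]. repeat split; try apply Hl01; auto. Qed.

Lemma W_sparse_from_length M N P : (M <= N)%nat -> sep ((/2)^N) P ->
  (forall y, In y P -> W_sparse_from M y) -> INR (length P) <= 64 * exp (c * F N / 2).
Proof.
  intros HN Hsep HP. pose proof (cF_nonneg N).
  pose proof (four_pow_le_exp (c * F N) (cF_nonneg N)) as H4.
  replace (c * F N / 4) with (c / 4 * F N) in H4 by field.
  eapply Rle_trans; [|apply Rmult_le_compat_l; [lra|exact H4]].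
  apply (separated_length_le l N); auto; [lra|].
  intros y Hy. apply (W_sparse_from_counts M); auto.
Qed.

Lemma W_sparse_from_cover_at M N delta :
  (M <= N)%nat -> (Ng <= N)%nat -> 2 * (/2)^N < delta ->
  fin_cover g (W_sparse_from M) delta (64 * exp (- (c * F N) / 2)).
Proof.
  intros HM HNg Hd.
  pose proof (four_pow_le_exp (c * F N) (cF_nonneg N)) as H4.
  replace (c * F N / 4) with (c / 4 * F N) in H4 by field.
  apply (fin_cover_mono _ _ _ (64 * Rpower 4 (c / 4 * F N) * g (2 * (/2)^N))).
  - assert (Rpower 4 (c / 4 * F N) * g (2 * (/2)^N) <= exp (- (c * F N) / 2)).
    { eapply Rle_trans.
      - apply Rmult_le_compat; [left; apply exp_pos|apply Hg_nonneg|exact H4|].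
        apply Hg_small, HNg.
      - rewrite <- exp_plus. apply exp_le_mono. lra. }
    lra.
  - apply (maximal_separated_cover g l); auto.
    + pose proof (cF_nonneg N). lra.
    + intros y Hy. apply (W_sparse_from_counts M); auto.
Qed.

(** Each E_M has finite delta-covers of arbitrarily small cost r: either
    F(N) is large for some large N and we cover at scale 2^-N, or F stays
    bounded and E_M has boundedly many points. *)
Lemma W_sparse_from_cover M delta r :
  0 < delta -> 0 < r -> fin_cover g (W_sparse_from M) delta r.
Proof.
  intros Hd Hr.
  destruct (half_pow_small (delta / 2) ltac:(lra)) as [Nd HNd].
  set (N1 := Nat.max (Nat.max M Nd) Ng).
  destruct (classic (exists N, (N1 <= N)%nat /\ 64 * exp (- (c * F N) / 2) <= r))
    as [[N [HN Hsmall]]|Hlarge].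
  - apply (fin_cover_mono _ _ _ _ _ Hsmall).
    apply W_sparse_from_cover_at; try lia. specialize (HNd N ltac:(lia)). lra.
  - apply (fin_cover_mono _ _ _ 0); [lra|].
    destruct (nat_ceiling (64 * 64 / r)) as [B [_ HB]].
    { apply Rlt_le, Rdiv_lt_0_compat; lra. }
    apply (finite_set_cover g _ delta B); auto.
    intros P HP HPE. apply HB.
    destruct (sep_of_NoDup P HP) as [d [Hdpos Hsep]].
    destruct (half_pow_small d Hdpos) as [Nd' HNd'].
    set (N := Nat.max N1 Nd').
    assert (Hsep' : sep ((/2)^N) P) by (apply (sep_mono _ d); [left; apply HNd'; lia|auto]).
    eapply Rle_trans; [apply (W_sparse_from_length M N); auto; lia|].
    assert (Hr' : r < 64 * exp (- (c * F N) / 2)).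
    { destruct (Rlt_le_dec r (64 * exp (- (c * F N) / 2))); auto.
      exfalso. apply Hlarge. exists N. split; [lia|auto]. }
    assert (Hinv : exp (c * F N / 2) * exp (- (c * F N) / 2) = 1).
    { rewrite <- exp_plus. replace (c * F N / 2 + - (c * F N) / 2) with 0 by field.
      apply exp_0. }
    assert (exp (c * F N / 2) <= 64 / r).
    { apply (Rmult_le_reg_r r); auto. replace (64 / r * r) with 64 by (field; lra).
      pose proof (exp_pos (c * F N / 2)). nra. }
    replace (64 * 64 / r) with (64 * (64 / r)) by (field; lra). lra.
Qed.

Theorem Hmeasure_zero_of_sparse_W :
  (forall a, l a -> little_o (fun N => INR (countW l a N)) F) ->
  is_Hmeasure g l (Fin 0).
Proof.
  intros Ho. apply Hmeasure_zero_of_small_covers; auto.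
  intros delta eps Hd He.
  destruct (concat_covers g l W_sparse_from delta eps) as [s [Hs Hle]]; auto.
  - intros x Hx.
    destruct (little_o_eventually_le _ F (c / 4) (Ho x Hx) HF ltac:(lra)) as [M HM].
    exists M. split; auto.
  - intros M. apply W_sparse_from_cover; auto.
    pose proof (half_pow_pos (S (S M))). apply Rmult_lt_0_compat; lra.
  - exists s. split; auto. lra.
Qed.

End Sparse_W.

Lemma cutoff_exp_gauge (h : R -> R) :
  (forall y, 0 <= (if Rle_dec y 0 then 0 else exp (h y))) /\
  (if Rle_dec 0 0 then 0 else exp (h 0)) = 0.
Proof.
  split.
  - intro y. destruct (Rle_dec y 0); [lra|left; apply exp_pos].
  - destruct (Rle_dec 0 0); [auto|lra].
Qed.

Lemma ln2_pos : 0 < ln 2.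
Proof. rewrite <- ln_1. apply ln_increasing; lra. Qed.

Lemma dyadic_pos N : 0 < 2 * (/2)^N.
Proof. pose proof (half_pow_pos N); lra. Qed.

Lemma ln_dyadic N : ln (2 * (/2)^N) = (1 - INR N) * ln 2.
Proof.
  rewrite ln_mult by (try lra; apply half_pow_pos).
  rewrite ln_pow, ln_Rinv by lra. ring.
Qed.

Lemma INR_ge_2 N : (2 <= N)%nat -> 2 <= INR N.
Proof. intros H. replace 2 with (INR 2) by (simpl; lra). apply le_INR, H. Qed.

Lemma gauge_of_f_dyadic f N :
  gauge_of_f f (2 * (/2)^N) <= exp (- (1 * f (INR N))).
Proof.
  unfold gauge_of_f. pose proof (dyadic_pos N). pose proof ln2_pos.
  destruct (Rle_dec (2 * (/2)^N) 0); [lra|].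
  rewrite ln_dyadic. replace (1 - (1 - INR N) * ln 2 / ln 2) with (INR N) by (field; lra).
  rewrite Rmult_1_l; lra.
Qed.

Lemma gauge_sigma_dyadic sigma N : 0 < sigma -> (2 <= N)%nat ->
  gauge_sigma sigma (2 * (/2)^N) <= exp (- (Rpower (ln 2 / 2) sigma * Rpower (INR N) sigma)).
Proof.
  intros Hs HN. unfold gauge_sigma. pose proof (dyadic_pos N). pose proof ln2_pos.
  pose proof (INR_ge_2 N HN).
  destruct (Rle_dec (2 * (/2)^N) 0); [lra|].
  apply exp_le_mono, Ropp_le_contravar. rewrite ln_dyadic, Rpower_mult_distr by lra.
  apply Rle_Rpower_l; [lra|]. split; nra.
Qed.

Lemma power_gauge_dyadic s N : 0 < s -> (2 <= N)%nat ->
  power_gauge s (2 * (/2)^N) <= exp (- (s * ln 2 / 2 * INR N)).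
Proof.
  intros Hs HN. unfold power_gauge, Rpower. pose proof (dyadic_pos N). pose proof ln2_pos.
  pose proof (INR_ge_2 N HN).
  destruct (Rle_dec (2 * (/2)^N) 0); [lra|].
  apply exp_le_mono. rewrite ln_dyadic.
  assert (0 <= (s * ln 2) * (INR N - 2)) by (apply Rmult_le_pos; nra). nra.
Qed.

Lemma dimH_zero_of_null (F : R -> Prop) :
  (forall s, 0 < s -> is_Hmeasure (power_gauge s) F (Fin 0)) -> is_dimH F 0.
Proof.
  intros Hnull. split.
  - intros x [Hx _]; lra.
  - intros b Hb. destruct (Rle_dec b 0) as [|Hn]; auto. exfalso.
    assert (b <= b / 2) by (apply Hb; split; [lra|apply Hnull; lra]). lra.
Qed.

(** Each part follows from [Hmeasure_zero_of_sparse_W], which even gives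
    H^g(l) = 0.  The third part applies it to
    every power gauge x^s, s > 0. *)
Theorem proposition4p3 (l : R -> Prop) (Hcomp : compact l)
  (Hsub : forall x, l x -> 0 <= x <= 1) :
  (forall f : R -> R,
     (forall x, 0 <= x -> 0 <= f x) ->
     (forall a, l a -> little_o (fun N => INR (countW l a N)) (fun N => f (INR N))) ->
     exists r, is_Hmeasure (gauge_of_f f) l (Fin r))
  /\
  (forall sigma, 0 < sigma < 1 ->
     (forall a, l a ->
        little_o (fun N => INR (countW l a N)) (fun N => Rpower (INR N) sigma)) ->
     exists r, is_Hmeasure (gauge_sigma sigma) l (Fin r))
  /\
  ((forall a, l a -> little_o (fun N => INR (countW l a N)) (fun N => INR N)) ->
     is_dimH l 0).
Proof.
  split; [|split].
  - intros f Hf Ho. exists 0.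
    destruct (cutoff_exp_gauge (fun x => - f (1 - ln x / ln 2))) as [Hg Hg0].
    apply (Hmeasure_zero_of_sparse_W l _ (fun N => f (INR N)) 1 0); auto; try lra.
    + intro N; apply Hf, pos_INR.
    + intros N _. apply gauge_of_f_dyadic.
  - intros sigma Hs Ho. exists 0.
    destruct (cutoff_exp_gauge (fun x => - Rpower (- ln x) sigma)) as [Hg Hg0].
    apply (Hmeasure_zero_of_sparse_W l _ (fun N => Rpower (INR N) sigma)
             (Rpower (ln 2 / 2) sigma) 2); auto.
    + apply exp_pos.
    + intro N; left; apply exp_pos.
    + intros N HN. apply gauge_sigma_dyadic; [lra|auto].
  - intros Ho. apply dimH_zero_of_null. intros s Hs.
    destruct (cutoff_exp_gauge (fun x => s * ln x)) as [Hg Hg0].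
    pose proof ln2_pos.
    apply (Hmeasure_zero_of_sparse_W l _ (fun N => INR N) (s * ln 2 / 2) 2); auto.
    + apply Rmult_lt_0_compat; [apply Rmult_lt_0_compat|]; lra.
    + intro N; apply pos_INR.
    + intros N HN. apply power_gauge_dyadic; auto.
Qed.
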